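(* Let $R_3,R_2,R_1$ be three runs that lie consecutively in $\{1,\dots,n\}$ in this left-to-right order, with no gaps between them. Let $p_3=P(R_3,R_2)$ and $p_2=P(R_2,R_1)$, and suppose $p_3>p_2$. Then $\mathrm{mid}(R_1)-\mathrm{mid}(R_3)\ge n/2^{p_3+1}$.
   Context: Assume $n=2^a-1$ for an integer $a\ge1$. Each index $j\in\{1,\dots,n\}$ has power $\mathrm{pow}(j)=a-1-\nu_2(j)$, where $\nu_2(j)$ is the exponent of $2$ in $j$. Equivalently, $\mathrm{pow}(j)$ is the depth of node $j$ in the perfect binary tree on $\{1,\dots,n\}$ in in-order, so the center has power $0$. A run is a nonempty set of consecutive indices $\{s,\dots,e\}$, and its midpoint is $\mathrm{mid}=(s+e)/2$. For a run $R$ and the run $R'$ immediately to its right, the power of $R$ (relative to $R'$) is $P(R,R')=\min\{\mathrm{pow}(j): j\in\mathbb{Z},\ \mathrm{mid}(R)\le j\le \mathrm{mid}(R')\}$. *)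

From mathcomp Require Import all_boot all_order all_algebra.
Set Implicit Arguments. Unset Strict Implicit. Unset Printing Implicit Defensive.
Import Order.TTheory GRing.Theory Num.Theory.

(* Power of index j when n = 2^a - 1:  pow(j) = a - 1 - nu_2(j).
   nu_2(j) is logn 2 j (exponent of 2 in j). *)
Definition pow (a j : nat) : nat := (a.-1 - logn 2 j)%N.

(* A run {s,...,e} is represented by its endpoints (s, e) with s <= e.
   Its midpoint (s+e)/2 as a rational. *)
Definition mid (s e : nat) : rat := ((s%:R + e%:R) / 2)%R.

(* P(R,R') = min { pow j : j integer, mid(R) <= j <= mid(R') },
   for R = {s..e}, R' = {s'..e'} inside {1..n}; all such j lie in {1..n}
   (indeed in {0..n} suffices), and the range is nonempty (contains e, e+1),
   so the default value a of the big min is never attained spuriously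
   (every pow value is <= a-1 < a). *)
Definition Ppow (a n s e s' e' : nat) : nat :=
  \big[minn/a]_(j < n.+1 | ((mid s e <= j%:R)%R && (j%:R <= mid s' e')%R)) pow a j.

From mathcomp Require Import all_boot all_order all_algebra.
From mathcomp Require Import zify lra.
Import Order.TTheory GRing.Theory Num.Theory.

(* Let [j1] realise [p3] between mid R3 and mid R2, and [j0] realise [p2]
   between mid R2 and mid R1, so [j1 <= j0].  With [m = a - 1 - p3], the
   2-adic valuation of [j1] is [m] while that of [j0] exceeds [m]; hence
   [j0 <> j1] and both are multiples of [2^m], so
   mid R1 - mid R3 >= j0 - j1 >= 2^m = 2^a / 2^(p3+1) > n / 2^(p3+1). *)

Lemma pow_le_pred (a j : nat) : (pow a j <= a.-1)%N.
Proof. exact: leq_subr. Qed.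

Lemma logn2_lt (a j : nat) : (0 < j < 2 ^ a)%N -> (logn 2 j < a)%N.
Proof.
case/andP=> j_gt0 lt_j2a; rewrite -(@ltn_exp2l 2) //.
exact: leq_ltn_trans (dvdn_leq j_gt0 (pfactor_dvdnn 2 j)) lt_j2a.
Qed.

Lemma pow_add_logn2 (a j : nat) :
  (0 < j < 2 ^ a)%N -> (pow a j + logn 2 j)%N = a.-1.
Proof. by move/logn2_lt; rewrite /pow; lia. Qed.

Lemma dvdn_leq_sub (d x y : nat) : (x < y)%N -> d %| x -> d %| y -> (d <= y - x)%N.
Proof. by rewrite -subn_gt0 => ? dx dy; apply: dvdn_leq => //; apply: dvdn_sub. Qed.

Lemma pow_gap (a j j' : nat) :
  (0 < j <= j')%N -> (j' < 2 ^ a)%N -> (pow a j' < pow a j)%N ->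
  (2 ^ (a.-1 - pow a j) <= j' - j)%N.
Proof.
case/andP=> j_gt0 le_jj' lt_j'2a lt_pow.
have lt_j2a : (j < 2 ^ a)%N := leq_ltn_trans le_jj' lt_j'2a.
have vj : (pow a j + logn 2 j)%N = a.-1 by apply: pow_add_logn2; rewrite j_gt0.
have vj' : (pow a j' + logn 2 j')%N = a.-1.
  by apply: pow_add_logn2; rewrite (leq_trans j_gt0 le_jj').
have -> : (a.-1 - pow a j)%N = logn 2 j by lia.
have lt_logn : (logn 2 j < logn 2 j')%N by lia.
have ne_jj' : j != j' by apply: contraTneq lt_pow => ->; rewrite ltnn.
apply: dvdn_leq_sub; first by rewrite ltn_neqAle ne_jj'.
  exact: pfactor_dvdnn.
exact: dvdn_trans (dvdn_exp2l 2 (ltnW lt_logn)) (pfactor_dvdnn 2 j').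
Qed.

Lemma mid_leE (s e j : nat) : (mid s e <= j%:R :> rat)%R = (s + e <= 2 * j)%N.
Proof. by rewrite /mid ler_pdivrMr // -natrD -natrM ler_nat mulnC. Qed.

Lemma le_midE (s e j : nat) : (j%:R <= mid s e :> rat)%R = (2 * j <= s + e)%N.
Proof. by rewrite /mid ler_pdivlMr // -natrD -natrM ler_nat mulnC. Qed.

Lemma Ppow_attained (a n s e s' e' j : nat) :
  (j <= n)%N -> (s + e <= 2 * j <= s' + e')%N ->
  exists i, [/\ (i <= n)%N, (s + e <= 2 * i)%N, (2 * i <= s' + e')%N
              & Ppow a n s e s' e' = pow a i].
Proof.
rewrite -ltnS => lt_jn range_j; pose j0 : 'I_n.+1 := Ordinal lt_jn.
rewrite /Ppow -minEnat (bigmin_eq_arg _ j0) ?mid_leE ?le_midE //; last first.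
  by move=> i _; exact: leq_trans (pow_le_pred a i) (leq_pred a).
case: arg_minP; first by rewrite /= mid_leE le_midE.
move=> i /andP[]; rewrite mid_leE le_midE => ? ? _.
by exists i; split; rewrite // -ltnS.
Qed.

Lemma mid_sub_ge (s e s' e' d : nat) :
  (s + e + 2 * d <= s' + e')%N -> (d%:R <= mid s' e' - mid s e :> rat)%R.
Proof. by rewrite -(ler_nat rat) !natrD /mid; lra. Qed.

Lemma ler_div_exp2 (n m p : nat) :
  (n <= 2 ^ m * 2 ^ p)%N -> (n%:R / 2 ^+ p <= (2 ^ m)%:R :> rat)%R.
Proof. by rewrite ler_pdivrMr ?exprn_gt0 // -natrX -natrM ler_nat. Qed.

Theorem mainTheorem7 (a n s3 e3 e2 e1 : nat) :
  (1 <= a)%N -> n = (2 ^ a - 1)%N ->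
  (1 <= s3)%N -> (s3 <= e3)%N -> (e3 < e2)%N -> (e2 < e1)%N -> (e1 <= n)%N ->
  (Ppow a n e3.+1 e2 e2.+1 e1 < Ppow a n s3 e3 e3.+1 e2)%N ->
  (n%:R / 2 ^+ (Ppow a n s3 e3 e3.+1 e2).+1 <= mid e2.+1 e1 - mid s3 e3 :> rat)%R.
Proof.
move=> a_gt0 n_def s3_gt0 le_s3e3 lt_e3e2 lt_e2e1 le_e1n.
have lt_n2a : (n < 2 ^ a)%N by rewrite n_def subn1 prednK ?expn_gt0.
have [j1 [_ lo_j1 hi_j1 ->]] := @Ppow_attained a n s3 e3 e3.+1 e2 e3 ltac:(lia) ltac:(lia).
have [j0 [le_j0n lo_j0 hi_j0 ->]] := @Ppow_attained a n e3.+1 e2 e2.+1 e1 e2 ltac:(lia) ltac:(lia).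
move=> lt_pow; set m := (a.-1 - pow a j1)%N.
have gap : (2 ^ m <= j0 - j1)%N by apply: pow_gap => //; lia.
apply: le_trans (@mid_sub_ge _ _ _ _ (2 ^ m) _); last by move: gap; set d := (2 ^ m)%N; lia.
apply/ler_div_exp2; rewrite -expnD.
suff -> : (m + (pow a j1).+1 = a)%N by exact: ltnW.
by have := pow_le_pred a j1; rewrite /m; lia.
Qed.
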